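(* Let $\mathcal S$ be a finite state set with $n = |\mathcal S|$, and let $\mathcal S_T\subset\mathcal S$ be a nonempty set of terminal states with $m=|\mathcal S_T|$. Let $\mathbf P$ be an $n\times n$ row-stochastic matrix (the transition matrix induced by a default policy) in which every terminal state is absorbing: $\mathbf P(s_T,s_T)=1$ for all $s_T\in\mathcal S_T$. Fix $\lambda>0$ and rewards $r(s)<0$ for all non-terminal $s\in\mathcal S\setminus\mathcal S_T$, and for $\delta>0$ set $r(s_T) = -\delta$ for every $s_T\in\mathcal S_T$. Let $\mathbf R_\delta = \operatorname{diag}(\exp(-\mathbf r/\lambda))$ and $\mathbf Z_\delta = (\mathbf R_\delta - \mathbf P)^{-1}$ (the default representation). Then, as $\delta\to 0^+$, the columns of $\mathbf Z_\delta$ corresponding to the terminal states form a basis of the eigenspace of the principal eigenvalue of $\mathbf Z_\delta$. Precisely: $\mathbf R_\delta-\mathbf P$ is invertible for every $\delta>0$; there is $\delta_0>0$ such that for all $\delta\in(0,\delta_0)$ the eigenvalue of $\mathbf Z_\delta$ of largest modulus is $1/(e^{\delta/\lambda}-1)$ and its eigenspace $\mathcal E_\delta$ has dimension $m$; the span $\mathcal C_\delta$ of the $m$ columns of $\mathbf Z_\delta$ indexed by $\mathcal S_T$ has dimension $m$; and $\mathcal C_\delta$ converges to $\mathcal E_\delta$ as $\delta\to0^+$, in the sense that $\|\Pi_{\mathcal C_\delta} - \Pi_{\mathcal E_\delta}\|\to 0$, where $\Pi_{\mathcal W}$ denotes the orthogonal projector onto a subspace $\mathcal W$.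
   Context: $\exp$ and $\operatorname{diag}$ act entrywise, so $\mathbf R_\delta$ is the diagonal matrix with entries $e^{-r(s)/\lambda}$. The principal eigenvalue of a matrix is its eigenvalue of largest modulus. The matrix $\mathbf Z_\delta$ is not symmetrized here. *)

From HB Require Import structures.
From mathcomp Require Import all_boot all_order all_algebra.
From mathcomp Require Import complex.
From mathcomp Require Import all_classical all_reals all_analysis.
Set Implicit Arguments. Unset Strict Implicit. Unset Printing Implicit Defensive.
Import Order.TTheory GRing.Theory Num.Theory.
Local Open Scope ring_scope.

(* Matrices act on COLUMN vectors as in the paper; MathComp's mxalgebra works
   with row spaces, so right eigenvectors / columns of Z are handled through
   the transpose Z^T. *)

Definition row_stochastic (R : realType) (n : nat) (P : 'M[R]_n) : Prop :=
  (forall i j, 0 <= P i j) /\ (forall i, \sum_j P i j = 1).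

Definition reward_delta (R : realType) (n : nat) (ST : {set 'I_n})
  (r : 'I_n -> R) (delta : R) : 'I_n -> R :=
  fun s => if s \in ST then - delta else r s.

Definition R_delta (R : realType) (n : nat) (ST : {set 'I_n})
  (r : 'I_n -> R) (lam delta : R) : 'M[R]_n :=
  diag_mx (\row_s expR (- reward_delta ST r delta s / lam)).

Definition Z_delta (R : realType) (n : nat) (ST : {set 'I_n}) (P : 'M[R]_n)
  (r : 'I_n -> R) (lam delta : R) : 'M[R]_n :=
  invmx (R_delta ST r lam delta - P).

Definition cplx_mx (R : realType) (n : nat) (A : 'M[R]_n) : 'M[R[i]]_n :=
  map_mx (fun x => (x%:C)%C) A.

Definition principal_eigenvalue (R : realType) (n : nat) (A : 'M[R]_n) (x : R)
  : Prop :=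
  eigenvalue (cplx_mx A) (x%:C)%C /\
  forall mu : R[i], eigenvalue (cplx_mx A) mu -> mu != (x%:C)%C ->
    `|mu| < `|(x%:C)%C|.

(* Eigenspace of A (acting on column vectors) for the eigenvalue a, encoded as
   a row space: {v | A v = a v} = row space of eigenspace A^T a. *)
Definition right_eigenspace (R : realType) (n : nat) (A : 'M[R]_n) (a : R)
  : 'M[R]_n := eigenspace A^T a.

(* Span of the columns of A indexed by ST, encoded as a row space: rows of A^T
   indexed by ST (the other rows are zeroed out). *)
Definition cols_span (R : realType) (n : nat) (ST : {set 'I_n}) (A : 'M[R]_n)
  : 'M[R]_n := diag_mx (\row_i (i \in ST)%:R) *m A^T.

Definition orth_proj (R : realType) (n : nat) (W : 'M[R]_n) : 'M[R]_n :=
  let B := row_base W in (B^T *m invmx (B *m B^T) *m B).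

From HB Require Import structures.
From mathcomp Require Import all_boot all_order all_algebra.
From mathcomp Require Import complex.
From mathcomp Require Import all_classical all_reals all_analysis.
From mathcomp Require Import ring lra.
Set Implicit Arguments. Unset Strict Implicit. Unset Printing Implicit Defensive.
Import Order.TTheory GRing.Theory Num.Theory.
Import numFieldNormedType.Exports.
Local Open Scope classical_set_scope.
Local Open Scope ring_scope.

(* Write c = e^(delta/lambda) - 1 and M_c = R_delta - P.  The terminal rows of
   P are unit vectors, so the terminal rows of M_c are c e_t, while every other
   diagonal entry e^(-r(s)/lambda) exceeds 1 + c once c is small.  A
   maximum-modulus argument on the rows of the stochastic matrix P then shows
   that M_c is invertible, that every eigenvalue nu of M_c with |nu| <= c
   equals c, and that a c-eigenvector vanishing on S_T is zero: hence 1/c is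
   the principal eigenvalue of Z_delta = M_c^-1, with an eigenspace of
   dimension at most m.
   Let G_c agree with M_c - c off S_T and have the unit vectors e_t as its
   terminal rows.  The terminal columns of adj(G_c) are c-eigenvectors of M_c,
   and the terminal columns of Z_delta are multiples of those of adj(G_0).  So
   both subspaces have bases that are polynomial in c and coincide at c = 0;
   their orthogonal projectors are rational functions of c without pole at 0,
   hence converge to each other. *)

Section Spectrum.
Variables (F : fieldType) (n : nat).
Implicit Types A : 'M[F]_n.

Lemma eigenvalueE A a : eigenvalue A a = (A - a%:M \notin unitmx).
Proof. by rewrite /eigenvalue /eigenspace kermx_eq0 row_free_unit. Qed.

Lemma eigenvalue_trmx A a : eigenvalue A^T a = eigenvalue A a.
Proof. by rewrite !eigenvalueE -[A - _]trmxK unitmx_tr linearB /= tr_scalar_mx. Qed.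

Lemma eigenvalue_cV A a :
  eigenvalue A a -> exists2 x : 'cV_n, A *m x = a *: x & x != 0.
Proof.
rewrite -eigenvalue_trmx => /eigenvalueP[v v_eig v_nz].
by exists v^T; rewrite ?trmx_eq0 // -[A]trmxK -trmx_mul v_eig linearZ.
Qed.

Lemma sub_eigenspace_invmx A mu m (W : 'M[F]_(m, n)) : A \in unitmx -> mu != 0 ->
  (W <= eigenspace (invmx A) mu)%MS = (W <= eigenspace A mu^-1)%MS.
Proof.
move=> A_unit mu_nz; apply/eigenspaceP/eigenspaceP => W_eig.
  by rewrite -[X in _ = _ *: X](mulmxKV A_unit) W_eig -scalemxAl scalerA mulVf ?scale1r.
by rewrite -[X in _ = _ *: X](mulmxK A_unit) W_eig -scalemxAl scalerA mulfV ?scale1r.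
Qed.

Lemma eigenspace_invmx A mu : A \in unitmx -> mu != 0 ->
  (eigenspace (invmx A) mu :=: eigenspace A mu^-1)%MS.
Proof.
move=> A_unit mu_nz; apply/eqmxP/andP.
by split; [rewrite -sub_eigenspace_invmx | rewrite sub_eigenspace_invmx].
Qed.

Lemma eigenvalue_invmx A mu : A \in unitmx ->
  eigenvalue (invmx A) mu = eigenvalue A mu^-1.
Proof.
move=> A_unit; have [->|mu_nz] := eqVneq mu 0.
  by rewrite invr0 !eigenvalueE (raddf0 (@scalar_mx F n)) !subr0 unitmx_inv A_unit.
by rewrite /eigenvalue (eqmx_eq0 (eigenspace_invmx A_unit mu_nz)).
Qed.

End Spectrum.

Lemma unitmx_adj (F : fieldType) n (A : 'M[F]_n) : A \in unitmx -> \adj A \in unitmx.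
Proof.
move=> A_unit; have := unitmx_inv A; rewrite A_unit /invmx A_unit unitmxZ //.
by rewrite unitrV -unitmxE.
Qed.

Lemma row_free_colsub_tr (F : fieldType) n k (f : 'I_k -> 'I_n) (A : 'M[F]_n) :
  injective f -> A \in unitmx -> row_free (colsub f A)^T.
Proof.
move=> f_inj A_unit; rewrite trmx_mxsub rowsubE /row_free mxrankMfree.
  apply/row_freeP; exists (colsub f 1%:M); rewrite mul_rowsub_mx mul1mx.
  by apply/matrixP => i j; rewrite !mxE (inj_eq f_inj).
by rewrite row_free_unit unitmx_tr.
Qed.

Section StochasticDominance.
Variables (F : numFieldType) (n : nat) (Q : 'M[F]_n).
Hypothesis Q_ge0 : forall i j, 0 <= Q i j.
Hypothesis Q_sum1 : forall i, \sum_j Q i j = 1.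

Lemma stochastic_mulmx_norm_le (x : 'cV[F]_n) (b : F) i :
  (forall j, `|x j 0| <= b) -> `|(Q *m x) i 0| <= b.
Proof.
move=> x_le; rewrite mxE (le_trans (ler_norm_sum _ _ _)) // -[b]mul1r -(Q_sum1 i).
by rewrite mulr_suml; apply: ler_sum => j _; rewrite normrM ger0_norm // ler_wpM2l.
Qed.

Lemma absorbing_row t j : Q t t = 1 -> Q t j = (t == j)%:R.
Proof.
move=> Qtt; have [<-|tj] := eqVneq t j; first by rewrite Qtt.
have := Q_sum1 t; rewrite (bigD1 t) //= Qtt => /eqP.
rewrite addrC -subr_eq0 addrK => /eqP rest0.
apply: (psumr_eq0P _ rest0); last by rewrite eq_sym.
by move=> k _; apply: Q_ge0.
Qed.

Lemma absorbing_mulmx p t (y : 'M[F]_(n, p)) j : Q t t = 1 -> (Q *m y) t j = y t j.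
Proof.
move=> Qtt; rewrite mxE (bigD1 t) //= absorbing_row // eqxx mul1r big1 ?addr0 //.
by move=> k kt; rewrite absorbing_row // eq_sym (negbTE kt) mul0r.
Qed.

Lemma diag_sub_mulmxE p (d : 'rV[F]_n) (y : 'M[F]_(n, p)) i j :
  ((diag_mx d - Q) *m y) i j = d 0 i * y i j - (Q *m y) i j.
Proof. by rewrite mulmxBl mul_diag_mx !mxE. Qed.

Lemma dominant_eigvec_eq0 (d : 'rV[F]_n) nu (x : 'cV[F]_n) :
  (diag_mx d - Q) *m x = nu *: x ->
  (forall i, x i 0 != 0 -> 1 < `|d 0 i - nu|) -> x = 0.
Proof.
move=> x_eig x_dom; apply/matrixP => i j; rewrite (ord1 j) mxE.
have [k _ x_max] := @real_arg_maxP _ _ i xpredT (fun j => `|x j 0|) isT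
  (fun j _ => normr_real _).
suff xk0 : x k 0 = 0 by have := x_max i isT; rewrite /= xk0 normr0 normr_le0 => /eqP.
apply/eqP; apply: contraT => xk_nz.
(* At a coordinate k of maximal modulus, row k of the equation forces
   |d k - nu| <= 1. *)
have row_k : (d 0 k - nu) * x k 0 = (Q *m x) k 0.
  have := congr1 (fun y : 'cV[F]_n => y k 0) x_eig.
  rewrite /= diag_sub_mulmxE [RHS]mxE => eq_k.
  by rewrite mulrBl -eq_k opprB addrC subrK.
have : `|d 0 k - nu| * `|x k 0| <= 1 * `|x k 0|.
  by rewrite mul1r -normrM row_k stochastic_mulmx_norm_le // => l; apply: x_max.
by rewrite ler_pM2r ?normr_gt0 // => /(lt_le_trans (x_dom k xk_nz)); rewrite ltxx.
Qed.

Lemma diag_sub_stochastic_unit (d : 'rV[F]_n) :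
  (forall i, 1 < `|d 0 i|) -> diag_mx d - Q \in unitmx.
Proof.
move=> d_gt1; apply/negPn; have := eigenvalueE (diag_mx d - Q) 0.
rewrite (raddf0 (@scalar_mx F n)) subr0 => <-.
apply/negP => /eigenvalue_cV[x x_eig /negP[]]; apply/eqP.
by apply: dominant_eigvec_eq0 x_eig _ => i _; rewrite subr0.
Qed.

Lemma eigenvalue_absorbing (d : 'rV[F]_n) t :
  Q t t = 1 -> eigenvalue (diag_mx d - Q) (d 0 t - 1).
Proof.
move=> Qtt; apply/eigenvalueP; exists (delta_mx 0 t); last first.
  by apply/eqP => /matrixP/(_ 0 t); rewrite !mxE !eqxx => /eqP; rewrite oner_eq0.
rewrite -rowE; apply/rowP => j; rewrite !mxE.
rewrite absorbing_row // eqxx /= (eq_sym j t).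
by case: (t == j); rewrite ?mulr1n ?mulr0n ?mulr1 ?mulr0 ?subr0.
Qed.

Lemma small_eigenvalue_eq (ST : {set 'I_n}) (d : 'rV[F]_n) (c nu : F) :
  (forall t, t \in ST -> Q t t = 1 /\ d 0 t = 1 + c) ->
  (forall i, i \notin ST -> 1 + c < `|d 0 i|) ->
  eigenvalue (diag_mx d - Q) nu -> `|nu| <= c -> nu = c.
Proof.
move=> d_ST d_NST /eigenvalue_cV[x x_eig x_nz] nu_le.
apply/eqP; apply: contraT => nu_neq_c; case/eqP: x_nz.
apply: dominant_eigvec_eq0 (x_eig) _ => i xi_nz.
have [iST|iNST] := boolP (i \in ST).
  have [Qii dii] := d_ST i iST; case/negP: nu_neq_c; apply/eqP/(mulIf xi_nz).
  have := congr1 (fun y : 'cV[F]_n => y i 0) x_eig.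
  rewrite /= diag_sub_mulmxE absorbing_mulmx // [RHS]mxE dii.
  by rewrite mulrDl mul1r addrC addKr => ->.
apply: lt_le_trans (lerB_dist _ _); rewrite ltrBrDr (le_lt_trans _ (d_NST i iNST)) //.
by rewrite lerD2l.
Qed.

End StochasticDominance.

Section BasisProjection.
Variable R : realFieldType.

Definition basis_proj k n (B : 'M[R]_(k, n)) : 'M[R]_n :=
  B^T *m invmx (B *m B^T) *m B.

Lemma mulmx_trmx_eq0 n (u : 'rV[R]_n) : u *m u^T = 0 -> u = 0.
Proof.
move/matrixP/(_ 0 0); rewrite !mxE => uu0; apply/rowP => j; rewrite mxE.
have sq_ge0 l : true -> 0 <= u 0 l * u^T l 0 by rewrite mxE -expr2 sqr_ge0.
by have /eqP := psumr_eq0P sq_ge0 uu0 (i := j) isT; rewrite mxE mulf_eq0 orbb => /eqP.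
Qed.

Lemma row_free_gram_unit k n (B : 'M[R]_(k, n)) : row_free B -> B *m B^T \in unitmx.
Proof.
move=> B_free; rewrite -row_free_unit -kermx_eq0; apply/rowV0P => v /sub_kermxP vG0.
have vB0 : v *m B = 0.
  by apply: mulmx_trmx_eq0; rewrite trmx_mul mulmxA -(mulmxA v) vG0 mul0mx.
by apply/eqP; rewrite -(mulmx_free_eq0 _ B_free) vB0.
Qed.

Lemma basis_proj_sub m k n (W : 'M[R]_(m, n)) (B : 'M[R]_(k, n)) :
  row_free B -> (W <= B)%MS -> W *m basis_proj B = W.
Proof.
move=> B_free /submxP[u ->]; rewrite /basis_proj !mulmxA -(mulmxA u B).
by rewrite -(mulmxA u (B *m B^T)) mulmxV ?row_free_gram_unit // mulmx1.
Qed.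

Lemma basis_proj_orth m k n (W : 'M[R]_(m, n)) (B : 'M[R]_(k, n)) :
  W *m B^T = 0 -> W *m basis_proj B = 0.
Proof. by move=> WB0; rewrite /basis_proj !mulmxA WB0 !mul0mx. Qed.

Lemma basis_proj_compl_orth k n (B : 'M[R]_(k, n)) :
  row_free B -> (1%:M - basis_proj B) *m B^T = 0.
Proof.
move=> B_free; rewrite mulmxBl mul1mx /basis_proj -!mulmxA.
by rewrite mulVmx ?row_free_gram_unit // mulmx1 subrr.
Qed.

Lemma basis_proj_eqmx k1 k2 n (B1 : 'M[R]_(k1, n)) (B2 : 'M[R]_(k2, n)) :
  row_free B1 -> row_free B2 -> (B1 :=: B2)%MS -> basis_proj B1 = basis_proj B2.
Proof.
move=> B1_free B2_free /eqmxP/andP[sB12 /submxP[D B2E]].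
(* The range of basis_proj B1 lies in B1 <= B2, where basis_proj B2 is the
   identity, and 1 - basis_proj B1 kills B1^T, hence B2^T = B1^T *m D^T. *)
rewrite -[basis_proj B2]mul1mx -(subrK (basis_proj B1) 1%:M) mulmxDl.
rewrite basis_proj_orth ?add0r; last first.
  by rewrite B2E trmx_mul mulmxA basis_proj_compl_orth ?mul0mx.
by rewrite basis_proj_sub // (submx_trans _ sB12) ?submxMl.
Qed.

End BasisProjection.

Lemma orth_projE (R : realType) n (W : 'M[R]_n) k (B : 'M[R]_(k, n)) :
  row_free B -> (W :=: B)%MS -> orth_proj W = basis_proj B.
Proof.
move=> B_free WB; apply: basis_proj_eqmx (row_base_free W) B_free _.
exact: eqmx_trans (eq_row_base W) WB.
Qed.

Lemma cplx_mx_stochastic (R : realType) n (P : 'M[R]_n) : row_stochastic P ->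
  (forall i j, 0 <= cplx_mx P i j) /\ (forall i, \sum_j cplx_mx P i j = 1).
Proof.
case=> P_ge0 P_sum1; split=> [i j|i]; first by rewrite mxE ler0c.
by under eq_bigr do rewrite mxE; rewrite -rmorph_sum P_sum1 rmorph1.
Qed.

Lemma eigenvalue_cplx_invmx (R : realType) n (A : 'M[R]_n) mu : A \in unitmx ->
  eigenvalue (cplx_mx (invmx A)) mu = eigenvalue (cplx_mx A) mu^-1.
Proof.
have cplxE B : cplx_mx B = map_mx (real_complex R) B by [].
by move=> A_unit; rewrite !cplxE map_invmx eigenvalue_invmx ?map_unitmx.
Qed.

Lemma row_cols_span (R : realType) n (ST : {set 'I_n}) (A : 'M[R]_n) i :
  row i (cols_span ST A) = (i \in ST)%:R *: row i A^T.
Proof. by rewrite /cols_span row_mul row_diag_mx -scalemxAl -rowE mxE. Qed.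

Lemma cols_span_colsub (R : realType) n (ST : {set 'I_n}) (A : 'M[R]_n) :
  (cols_span ST A :=: (colsub (enum_val : 'I_#|ST| -> 'I_n) A)^T)%MS.
Proof.
rewrite trmx_mxsub; apply/eqmxP/andP; split; apply/row_subP => i.
  rewrite row_cols_span; have [iST|_] := boolP (i \in ST); last by rewrite scale0r sub0mx.
  by rewrite scale1r -(enum_rankK_in iST iST) -row_rowsub row_sub.
rewrite row_rowsub; have := row_cols_span ST A (enum_val i).
by rewrite enum_valP scale1r => <-; apply: row_sub.
Qed.

Section PolynomialContinuity.
Variable R : realType.

Lemma entrywise_cvg {T : Type} (F : set_system T) {FF : Filter F} k n
    (f : T -> 'M[R]_(k, n)) (L : 'M[R]_(k, n)) :
  (forall i j, (fun x => f x i j) @ F --> L i j) -> f @ F --> L.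
Proof.
move=> f_cvg; apply/cvgrPdist_le => /= e e_gt0; near=> x.
rewrite /Num.Def.normr /= mx_normrE (bigmax_le _ (ltW e_gt0)) //= => i _.
rewrite !mxE /=; move: i; near: x; apply: filter_forall => /= i.
exact: ((cvgrPdist_le _ _).1 (f_cvg i.1 i.2)).
Unshelve. all: by end_near. Qed.

Lemma basis_proj_poly_cvg k n (B : R -> 'M[R]_(k, n)) (Bp : 'M[{poly R}]_(k, n))
    (c0 : R) :
  (forall c, B c = map_mx (horner_eval c) Bp) -> row_free (B c0) ->
  basis_proj (B c) @[c --> c0] --> basis_proj (B c0).
Proof.
move=> BE B0_free.
set g := \det (Bp *m Bp^T); set W := Bp^T *m \adj (Bp *m Bp^T) *m Bp.
have gE c : g.[c] = \det (B c *m (B c)^T).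
  by rewrite BE map_trmx -map_mxM det_map_mx.
have projE c : g.[c] != 0 ->
    basis_proj (B c) = g.[c]^-1 *: map_mx (horner_eval c) W.
  move=> gc_nz; rewrite /basis_proj /invmx unitmxE -gE unitfE gc_nz.
  by rewrite -scalemxAr -scalemxAl BE !map_mxM map_mx_adj map_mxM map_trmx.
have g0_nz : g.[c0] != 0 by rewrite gE -unitfE -unitmxE row_free_gram_unit.
have rhs_cvg : g.[c]^-1 *: map_mx (horner_eval c) W @[c --> c0] -->
    g.[c0]^-1 *: map_mx (horner_eval c0) W.
  apply: entrywise_cvg => i j; rewrite !mxE; under eq_fun do rewrite !mxE.
  apply: cvgM; last exact: continuous_horner.
  by apply: cvgV => //; exact: continuous_horner.
rewrite projE //; apply: cvg_trans rhs_cvg; apply: near_eq_cvg.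
near=> c; rewrite projE //; near: c.
exact: cvgr_neq0 (@continuous_horner _ g c0) g0_nz.
Unshelve. all: by end_near. Qed.

End PolynomialContinuity.

Section DefaultRepresentation.
Variables (R : realType) (n : nat) (ST : {set 'I_n}) (P : 'M[R]_n) (q : 'I_n -> R).
Hypothesis P_stochastic : row_stochastic P.
Hypothesis P_absorbing : forall t, t \in ST -> P t t = 1.
Hypothesis q_gt1 : forall i, i \notin ST -> 1 < q i.
Hypothesis ST_neq0 : (0 < #|ST|)%N.

Let P_ge0 : forall i j, 0 <= P i j := P_stochastic.1.
Let P_sum1 : forall i, \sum_j P i j = 1 := P_stochastic.2.
Local Notation terminal := (enum_val : 'I_#|ST| -> 'I_n).

(* With q i = expR (- r i / lam), R_delta - P is Mc (expR (delta / lam) - 1). *)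
Definition Mc (c : R) : 'M[R]_n :=
  diag_mx (\row_i (if i \in ST then 1 + c else q i)) - P.

(* Off ST, Gc c agrees with Mc c - c%:M; the diagonal entries 2 make its
   terminal rows the unit vectors, since P t = e_t. *)
Definition Gc (c : R) : 'M[R]_n :=
  diag_mx (\row_i (if i \in ST then 2 else q i - c)) - P.

Definition Yc (c : R) : 'M[R]_(n, #|ST|) := colsub terminal (\adj (Gc c)).

Lemma Gc_mulmx_terminal c p (y : 'M[R]_(n, p)) t j :
  t \in ST -> (Gc c *m y) t j = y t j.
Proof.
by move=> tST; rewrite diag_sub_mulmxE absorbing_mulmx ?P_absorbing // mxE tST; ring.
Qed.

Lemma Mc_mulmxE c c' p (y : 'M[R]_(n, p)) i j :
  (Mc c *m y) i j = if i \in ST then c * y i j else (Gc c' *m y) i j + c' * y i j.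
Proof.
case: ifP => iST; rewrite !diag_sub_mulmxE.
  by rewrite absorbing_mulmx ?P_absorbing // mxE iST; ring.
by rewrite !mxE iST; ring.
Qed.

Lemma Mc_unit c : 0 < c -> Mc c \in unitmx.
Proof.
move=> c_gt0; apply: (diag_sub_stochastic_unit P_ge0 P_sum1) => i.
by apply: lt_le_trans (ler_norm _); rewrite mxE; case: ifP => [_|/negbT/q_gt1 //]; lra.
Qed.

Lemma Gc_unit c : (forall i, i \notin ST -> 1 + c < q i) -> Gc c \in unitmx.
Proof.
move=> c_gap; apply: (diag_sub_stochastic_unit P_ge0 P_sum1) => i.
apply: lt_le_trans (ler_norm _); rewrite mxE; case: ifP => [_|/negbT/c_gap]; lra.
Qed.

Lemma Yc_free c : Gc c \in unitmx -> row_free (Yc c)^T.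
Proof. by move=> G_unit; apply: row_free_colsub_tr enum_val_inj (unitmx_adj G_unit). Qed.

Lemma Gc_Yc c : Gc c *m Yc c = \det (Gc c) *: colsub terminal 1%:M.
Proof. by apply/matrixP => i k; rewrite mulmx_colsub mul_mx_adj !mxE mulr_natr. Qed.

Lemma colsub_terminal1_off i k :
  i \notin ST -> (colsub terminal 1%:M : 'M[R]_(n, #|ST|)) i k = 0.
Proof. by move=> iST; rewrite !mxE; case: eqP => // iE; rewrite iE enum_valP in iST. Qed.

Lemma Mc_Yc c : Mc c *m Yc c = c *: Yc c.
Proof.
apply/matrixP => i k; rewrite (Mc_mulmxE _ c) [RHS]mxE; case: ifP => iST //.
by rewrite Gc_Yc [X in X + _]mxE colsub_terminal1_off ?iST // mulr0 add0r.
Qed.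

Lemma Mc_Y0 c : Mc c *m Yc 0 = (c * \det (Gc 0)) *: colsub terminal 1%:M.
Proof.
apply/matrixP => i k; rewrite (Mc_mulmxE _ 0) [RHS]mxE; case: ifP => iST.
  by rewrite -(Gc_mulmx_terminal 0 _ _ iST) Gc_Yc mxE mulrA.
by rewrite Gc_Yc mxE colsub_terminal1_off ?iST // mulr0 mul0r add0r mulr0.
Qed.

Lemma Gc0_unit : Gc 0 \in unitmx.
Proof. by apply: Gc_unit => i /q_gt1; rewrite addr0. Qed.

Section SmallShift.
Variable c : R.
Hypothesis c_gt0 : 0 < c.
Hypothesis c_gap : forall i, i \notin ST -> 1 + c < q i.

Lemma eigenspace_Mc_rank : (\rank (eigenspace (Mc c)^T c) <= #|ST|)%N.
Proof.
set E := eigenspace _ _.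
suff capE0 : (E :&: kermx (colsub terminal 1%:M))%MS = 0.
  have := mxrank_mul_ker E (colsub terminal 1%:M).
  by rewrite capE0 mxrank0 addn0 => <-; apply: rank_leq_col.
apply/eqP/rowV0P => v.
rewrite sub_capmx => /andP[/eigenspaceP v_eig /sub_kermxP v_ST].
have v_ST0 t : t \in ST -> v 0 t = 0.
  move=> tST; have := congr1 (fun w : 'rV[R]_#|ST| => w 0 (enum_rank_in tST t)) v_ST.
  by rewrite /= mulmx_colsub mulmx1 !mxE enum_rankK_in.
have vT_eig : Mc c *m v^T = c *: v^T by rewrite -[Mc c]trmxK -trmx_mul v_eig linearZ.
apply: trmx_inj; rewrite trmx0; apply: (dominant_eigvec_eq0 P_ge0 P_sum1 vT_eig).
move=> i; rewrite mxE => vi_nz.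
have iNST : i \notin ST by apply: contra vi_nz => /v_ST0 ->.
by rewrite mxE (negbTE iNST) gtr0_norm; have := c_gap iNST; lra.
Qed.

Lemma right_eigenspace_Mc :
  (right_eigenspace (invmx (Mc c)) (1 / c) :=: (Yc c)^T)%MS.
Proof.
have YE : ((Yc c)^T <= eigenspace (Mc c)^T c)%MS.
  by apply/eigenspaceP; rewrite -trmx_mul Mc_Yc linearZ.
have rankY : \rank (Yc c)^T = #|ST| by apply/eqP; apply: Yc_free (Gc_unit c_gap).
rewrite /right_eigenspace trmx_inv; apply: eqmx_trans (eigenspace_invmx _ _) _.
- by rewrite unitmx_tr Mc_unit.
- by rewrite div1r invr_eq0 gt_eqF.
rewrite div1r invrK; apply: eqmx_sym; apply/eqmxP.
by rewrite -(mxrank_leqif_eq YE).2 eqn_leq mxrankS //= rankY eigenspace_Mc_rank.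
Qed.

Lemma cols_span_Mc : (cols_span ST (invmx (Mc c)) :=: (Yc 0)^T)%MS.
Proof.
have scale_nz : c * \det (Gc 0) != 0.
  by rewrite mulf_neq0 ?(gt_eqF c_gt0) // -unitfE -unitmxE Gc0_unit.
have Y0E : Yc 0 = (c * \det (Gc 0)) *: colsub terminal (invmx (Mc c)).
  by rewrite -[invmx _]mulmx1 -mulmx_colsub scalemxAr -Mc_Y0 mulKmx // Mc_unit.
apply: eqmx_trans (cols_span_colsub _ _) _; rewrite Y0E linearZ /=.
exact/eqmx_sym/eqmx_scale.
Qed.

Lemma Mc_principal : principal_eigenvalue (invmx (Mc c)) (1 / c).
Proof.
pose d : 'rV[R]_n := \row_i (if i \in ST then 1 + c else q i).
pose dC := map_mx (real_complex R) d.
have [cP_ge0 cP_sum1] := cplx_mx_stochastic P_stochastic.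
have evE mu : eigenvalue (cplx_mx (invmx (Mc c))) mu =
    eigenvalue (diag_mx dC - cplx_mx P) mu^-1.
  have cplxE A : cplx_mx A = map_mx (real_complex R) A by [].
  by rewrite (eigenvalue_cplx_invmx _ (Mc_unit c_gt0)) cplxE map_mxB map_diag_mx.
have dC_ST t : t \in ST -> cplx_mx P t t = 1 /\ dC 0 t = 1 + (c%:C)%C.
  by move=> tST; rewrite !mxE tST P_absorbing // rmorphD rmorph1.
have dC_NST i : i \notin ST -> 1 + (c%:C)%C < `|dC 0 i|.
  move=> iNST; rewrite !mxE (negbTE iNST) ger0_norm ?ler0c; last first.
    by apply: ltW; apply: lt_trans (q_gt1 iNST).
  by rewrite -(rmorph1 (real_complex R)) -rmorphD ltcR c_gap.
have cC_gt0 : 0 < (c%:C)%C by rewrite -(rmorph0 (real_complex R)) ltcR.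
have xE : ((1 / c)%:C)%C = (c%:C)%C^-1 by rewrite div1r fmorphV.
split.
  have [t tST] : exists t, t \in ST by apply/set0Pn; rewrite -card_gt0.
  have := eigenvalue_absorbing cP_ge0 cP_sum1 dC (dC_ST t tST).1.
  by rewrite evE xE invrK (dC_ST t tST).2 (addrC 1) addrK.
move=> mu mu_ev mu_neq; rewrite xE normfV (gtr0_norm cC_gt0).
rewrite real_ltNge ?normr_real ?realV ?gtr0_real //; apply/negP => mu_ge.
have mu_nz : mu != 0 by apply: contraTneq mu_ge => ->; rewrite normr0 invr_le0 lt_geF.
have muV : mu^-1 = (c%:C)%C.
  apply: (small_eigenvalue_eq cP_ge0 cP_sum1 dC_ST dC_NST); first by rewrite -evE.
  by rewrite normfV -[(c%:C)%C]invrK lef_pV2 ?posrE ?invr_gt0 ?normr_gt0.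
by case/eqP: mu_neq; rewrite xE -muV invrK.
Qed.

Lemma Mc_spectrum :
  [/\ principal_eigenvalue (invmx (Mc c)) (1 / c),
      \rank (right_eigenspace (invmx (Mc c)) (1 / c)) = #|ST|
    & \rank (cols_span ST (invmx (Mc c))) = #|ST|].
Proof.
rewrite right_eigenspace_Mc cols_span_Mc.
by split; [exact: Mc_principal | apply/eqP/Yc_free/Gc_unit | apply/eqP/Yc_free/Gc0_unit].
Qed.

End SmallShift.

Lemma exists_gap :
  exists2 c0 : R, 0 < c0 & forall c, c < c0 -> forall i, i \notin ST -> 1 + c < q i.
Proof.
exists (\big[Order.min/1]_(i | i \notin ST) (q i - 1)).
  apply: (big_ind (fun x => 0 < x)) => // [x y x_gt0 y_gt0|i /q_gt1].
    by rewrite lt_min x_gt0 y_gt0.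
  by rewrite subr_gt0.
move=> c c_lt i iNST.
have := lt_le_trans c_lt (@bigmin_le_cond _ _ _ 1 i _ (fun j => q j - 1) iNST).
by rewrite ltrBrDl addrC.
Qed.

Definition Gp : 'M[{poly R}]_n :=
  diag_mx (\row_i (if i \in ST then 2 else (q i)%:P - 'X)) - map_mx polyC P.

Lemma Gp_eval c : map_mx (horner_eval c) Gp = Gc c.
Proof.
apply/matrixP => i j; rewrite !mxE.
by case: ifP => _; rewrite /horner_eval !(hornerMn, hornerE).
Qed.

Lemma Yc_poly c : Yc c = map_mx (horner_eval c) (colsub terminal (\adj Gp)).
Proof. by rewrite map_mxsub map_mx_adj Gp_eval. Qed.

Lemma Yc_proj_cvg : basis_proj (Yc c)^T @[c --> 0] --> basis_proj (Yc 0)^T.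
Proof.
apply: (@basis_proj_poly_cvg R _ _ (fun c => (Yc c)^T) (colsub terminal (\adj Gp))^T 0).
  by move=> c; rewrite Yc_poly map_trmx.
exact: Yc_free Gc0_unit.
Qed.

Lemma orth_proj_Mc_cvg {T : Type} (F : set_system T) {FF : Filter F} (f : T -> R) :
  f t @[t --> F] --> 0 -> (\forall t \near F, 0 < f t) ->
  `|orth_proj (cols_span ST (invmx (Mc (f t))))
    - orth_proj (right_eigenspace (invmx (Mc (f t))) (1 / f t))| @[t --> F] --> 0.
Proof.
move=> f_cvg f_gt0; have [c0 c0_gt0 c0_gap] := exists_gap.
have dist_cvg : `|basis_proj (Yc 0)^T - basis_proj (Yc (f t))^T| @[t --> F] --> 0.
  apply/norm_cvg0P; rewrite -(subrr (basis_proj (Yc 0)^T)).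
  exact: cvgB (cvg_cst _) (cvg_comp _ _ f_cvg Yc_proj_cvg).
apply: cvg_trans dist_cvg; apply: near_eq_cvg; near=> t.
have ft_gt0 : 0 < f t by near: t.
have ft_gap : forall i, i \notin ST -> 1 + f t < q i.
  by apply: c0_gap; near: t; exact: cvgr_lt f_cvg _ c0_gt0.
rewrite (orth_projE (Yc_free Gc0_unit) (cols_span_Mc ft_gt0)).
by rewrite (orth_projE (Yc_free (Gc_unit ft_gap)) (right_eigenspace_Mc ft_gt0 ft_gap)).
Unshelve. all: by end_near. Qed.

End DefaultRepresentation.

Lemma R_delta_subE (R : realType) n (ST : {set 'I_n}) (P : 'M[R]_n)
    (r : 'I_n -> R) (lam delta : R) :
  R_delta ST r lam delta - P =
  Mc ST P (fun i => expR (- r i / lam)) (expR (delta / lam) - 1).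
Proof.
congr (diag_mx _ - _); apply/rowP => i; rewrite !mxE /reward_delta.
by case: ifP => // _; rewrite opprK addrC subrK.
Qed.

Lemma expR_sub1_lt (R : realType) (lam c0 delta : R) : 0 < lam -> 0 < c0 ->
  delta < lam * ln (1 + c0) -> expR (delta / lam) - 1 < c0.
Proof.
move=> lam_gt0 c0_gt0 delta_lt; rewrite ltrBlDl -[X in _ < X]lnK ?posrE ?addr_gt0 //.
by rewrite ltr_expR ltr_pdivrMr // mulrC.
Qed.

Lemma expR_sub1_cvg (R : realType) (lam : R) :
  expR (delta / lam) - 1 @[delta --> (0 : R)] --> (0 : R).
Proof.
have : expR (delta / lam) - 1 @[delta --> (0 : R)] --> expR (0 / lam) - 1.
  apply: cvgB; last exact: cvg_cst.
  exact: cvg_comp (cvgM cvg_id (cvg_cst _)) (@continuous_expR _ _).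
by rewrite mul0r expR0 subrr.
Qed.

Theorem theorem3p11 (R : realType) (n : nat) (ST : {set 'I_n})
  (P : 'M[R]_n) (lam : R) (r : 'I_n -> R) :
  (0 < #|ST|)%N ->
  row_stochastic P ->
  (forall t, t \in ST -> P t t = 1) ->
  0 < lam ->
  (forall s, s \notin ST -> r s < 0) ->
  (forall delta : R, 0 < delta -> R_delta ST r lam delta - P \in unitmx) /\
  (exists delta0 : R, 0 < delta0 /\
     forall delta : R, 0 < delta < delta0 ->
       principal_eigenvalue (Z_delta ST P r lam delta)
         (1 / (expR (delta / lam) - 1)) /\
       \rank (right_eigenspace (Z_delta ST P r lam delta)
                (1 / (expR (delta / lam) - 1))) = #|ST| /\
       \rank (cols_span ST (Z_delta ST P r lam delta)) = #|ST|) /\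
  (`| orth_proj (cols_span ST (Z_delta ST P r lam delta))
      - orth_proj (right_eigenspace (Z_delta ST P r lam delta)
                     (1 / (expR (delta / lam) - 1))) |
     @[delta --> 0^'+] --> 0).
Proof.
move=> ST_neq0 P_st P_abs lam_gt0 r_neg.
pose q i := expR (- r i / lam); pose c delta := expR (delta / lam) - 1.
have q_gt1 i : i \notin ST -> 1 < q i.
  by move=> iNST; rewrite expR_gt1 divr_gt0 // oppr_gt0 r_neg.
have c_gt0 delta : 0 < delta -> 0 < c delta.
  by move=> delta_gt0; rewrite subr_gt0 expR_gt1 divr_gt0.
have ZE delta : Z_delta ST P r lam delta = invmx (Mc ST P q (c delta)).
  by rewrite /Z_delta R_delta_subE.
have [c0 c0_gt0 c0_gap] := exists_gap q_gt1.
split; first by move=> delta /c_gt0; rewrite R_delta_subE; apply: Mc_unit.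
split.
  exists (lam * ln (1 + c0)); split; first by rewrite mulr_gt0 // ln_gt0 // ltrDl.
  move=> delta /andP[/c_gt0 cd_gt0 /(expR_sub1_lt lam_gt0 c0_gt0) /c0_gap cd_gap].
  by rewrite ZE; case: (Mc_spectrum P_st P_abs q_gt1 ST_neq0 cd_gt0 cd_gap).
have c_cvg : c delta @[delta --> 0^'+] --> 0 := cvg_at_right_filter (expR_sub1_cvg lam).
have c_near_gt0 : \forall delta \near 0^'+, 0 < c delta.
  by near=> delta; apply: c_gt0; near: delta; exact: nbhs_right_gt.
apply: cvg_trans (orth_proj_Mc_cvg P_st P_abs q_gt1 c_cvg c_near_gt0).
by apply: near_eq_cvg; near=> delta; rewrite ZE.
Unshelve. all: by end_near.
Qed.
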